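(* For $\alpha,\beta\in\mathbb{K}^\times$ with $\alpha\beta\neq1$ let $A_{5,\alpha,\beta}$ be the evolution algebra over the field $\mathbb{K}$ with natural basis $\{e_1,e_2\}$ such that $e_1^2=e_1+\beta e_2$ and $e_2^2=\alpha e_1+e_2$. For such pairs $(\alpha,\beta)$ and $(\alpha',\beta')$, $A_{5,\alpha,\beta}$ is isomorphic to $A_{5,\alpha',\beta'}$ as a $\mathbb{K}$-algebra if and only if $(\alpha,\beta)=(\alpha',\beta')$ or $(\alpha,\beta)=(\beta',\alpha')$.
   Context: An evolution algebra over $\mathbb{K}$ is a $\mathbb{K}$-algebra with a basis $\{e_i\}$ (natural basis) such that $e_ie_j=0$ for $i\neq j$. *)

From mathcomp Require Import all_boot all_order all_algebra.
Set Implicit Arguments. Unset Strict Implicit. Unset Printing Implicit Defensive.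
Import GRing.Theory.
Local Open Scope ring_scope.

(* Elements of the 2-dimensional algebra A_{5,alpha,beta} are written in the
   natural basis {e1, e2}: the pair (x1, x2) stands for x1 e1 + x2 e2. *)
Definition vec2 (K : fieldType) := (K * K)%type.

(* Multiplication of the evolution algebra with e1 e2 = e2 e1 = 0,
   e1^2 = e1 + beta e2, e2^2 = alpha e1 + e2, extended bilinearly:
   (x1 e1 + x2 e2)(y1 e1 + y2 e2) = x1 y1 e1^2 + x2 y2 e2^2. *)
Definition A5_mul (K : fieldType) (alpha beta : K) (x y : vec2 K) : vec2 K :=
  (x.1 * y.1 + alpha * (x.2 * y.2), beta * (x.1 * y.1) + x.2 * y.2).

Definition v2add (K : fieldType) (x y : vec2 K) : vec2 K := (x.1 + y.1, x.2 + y.2).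
Definition v2scale (K : fieldType) (a : K) (x : vec2 K) : vec2 K := (a * x.1, a * x.2).

Definition v2linear (K : fieldType) (f : vec2 K -> vec2 K) : Prop :=
  forall (a : K) (x y : vec2 K), f (v2add (v2scale a x) y) = v2add (v2scale a (f x)) (f y).

Definition A5_isomorphic (K : fieldType) (a b a' b' : K) : Prop :=
  exists f : vec2 K -> vec2 K,
    [/\ v2linear f, bijective f &
        forall x y : vec2 K, f (A5_mul a b x y) = A5_mul a' b' (f x) (f y)].

(* An isomorphism f sends the natural basis e1, e2 to u = f e1 and v = f e2 with
   u v = f (e1 e2) = 0.  As alpha' beta' != 1 this forces u1 v1 = u2 v2 = 0, so
   (u, v) is, up to the swap e1 <-> e2 of the target, of the form ((p, 0), (0, q))
   with p, q != 0.  Comparing f (e1^2) = u + beta v with u^2 and f (e2^2) =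
   alpha u + v with v^2 then gives p = q = 1 and (alpha, beta) = (alpha', beta'),
   or (beta', alpha') when the swap was needed.  Conversely the identity and the
   swap are isomorphisms. *)

From mathcomp Require Import all_boot all_order all_algebra.
From mathcomp Require Import ring.
Set Implicit Arguments. Unset Strict Implicit. Unset Printing Implicit Defensive.
Local Open Scope ring_scope.
Import GRing.Theory.

Definition swap2 {K : fieldType} (x : vec2 K) : vec2 K := (x.2, x.1).

Definition A5_iso (K : fieldType) (a b a' b' : K) (f : vec2 K -> vec2 K) :=
  [/\ v2linear f, bijective f &
      forall x y : vec2 K, f (A5_mul a b x y) = A5_mul a' b' (f x) (f y)].

Section SwapIsomorphism.
Variable K : fieldType.

Lemma swap2K : involutive (@swap2 K).
Proof. by case. Qed.

Lemma A5_mul_swap2 (a b : K) (x y : vec2 K) :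
  swap2 (A5_mul a b x y) = A5_mul b a (swap2 x) (swap2 y).
Proof. by rewrite /A5_mul /swap2 /=; congr pair; ring. Qed.

Lemma A5_iso_id (a b : K) : A5_iso a b a b id.
Proof. by split => //; exists id. Qed.

Lemma A5_iso_swap2_comp (a b a' b' : K) (f : vec2 K -> vec2 K) :
  A5_iso a b a' b' f -> A5_iso a b b' a' (swap2 \o f).
Proof.
case=> lin bij hom; split => [c x y | | x y] /=.
- by rewrite lin.
- exact: bij_comp (inv_bij swap2K) bij.
- by rewrite hom A5_mul_swap2.
Qed.

Lemma A5_iso_swap2 (a b : K) : A5_iso a b b a (@swap2 K).
Proof. exact: A5_iso_swap2_comp (A5_iso_id a b). Qed.

End SwapIsomorphism.

Section LinearMaps.
Variables (K : fieldType) (f : vec2 K -> vec2 K).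
Hypothesis lin : v2linear f.

Lemma v2linear0 : f (0, 0) = (0, 0).
Proof.
have := lin 1 (0, 0) (0, 0); rewrite /v2add /v2scale /= !mulr0 !addr0.
case: (f (0, 0)) => p q [hp hq]; rewrite !mul1r in hp hq.
by congr pair; [apply: (addrI p); rewrite -hp | apply: (addrI q); rewrite -hq]; rewrite addr0.
Qed.

Lemma v2linearZ (c : K) (x : vec2 K) : f (v2scale c x) = v2scale c (f x).
Proof.
by have := lin c x (0, 0); rewrite v2linear0 /v2add /= !addr0; apply.
Qed.

Lemma v2linearD (x y : vec2 K) : f (v2add x y) = v2add (f x) (f y).
Proof.
by have := lin 1 x y; rewrite /v2scale /= !mul1r -!surjective_pairing.
Qed.

Lemma v2linear_basis (x1 x2 : K) :
  f (x1, x2) = v2add (v2scale x1 (f (1, 0))) (v2scale x2 (f (0, 1))).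
Proof.
rewrite -!v2linearZ -v2linearD /v2add /v2scale /=.
by rewrite !mulr0 !mulr1 addr0 add0r.
Qed.

Lemma v2linear_inj_neq0 (x : vec2 K) :
  injective f -> x != (0, 0) -> f x != (0, 0).
Proof. by move=> inj; apply: contra => /eqP fx0; apply/eqP/inj; rewrite fx0 v2linear0. Qed.

End LinearMaps.

Lemma A5_mul_eq0 (K : fieldType) (a b : K) (x y : vec2 K) : a * b != 1 ->
  A5_mul a b x y = (0, 0) -> x.1 * y.1 = 0 /\ x.2 * y.2 = 0.
Proof.
rewrite /A5_mul; set p := x.1 * y.1; set q := x.2 * y.2 => hab [h1 h2].
have hq : q = - (b * p) by apply/eqP; rewrite -subr_eq0 opprK addrC h2.
have /eqP : p * (1 - a * b) = 0 by rewrite -h1 hq; ring.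
rewrite mulf_eq0 subr_eq0 [1 == _]eq_sym (negbTE hab) orbF => /eqP hp.
by rewrite hq hp mulr0 oppr0.
Qed.

Section IsomorphismImages.
Variables (K : fieldType) (alpha beta alpha' beta' : K) (f : vec2 K -> vec2 K).
Hypotheses (iso : A5_iso alpha beta alpha' beta' f) (hab' : alpha' * beta' != 1).

Let u := f (1, 0).
Let v := f (0, 1).

Lemma A5_iso_images :
  [/\ A5_mul alpha' beta' u v = (0, 0),
      A5_mul alpha' beta' u u = v2add u (v2scale beta v) &
      A5_mul alpha' beta' v v = v2add (v2scale alpha u) v].
Proof.
case: iso => lin _ hom; rewrite /u /v -!hom /A5_mul /=.
rewrite ?(mulr0, mul0r, mulr1, mul1r, addr0, add0r).
rewrite v2linear0 // (v2linear_basis lin 1 beta) (v2linear_basis lin alpha 1).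
by rewrite /v2scale /= !mul1r -!surjective_pairing.
Qed.

Lemma A5_iso_basis_neq0 : u != (0, 0) /\ v != (0, 0).
Proof.
case: iso => lin /bij_inj inj _.
by split; apply: v2linear_inj_neq0 => //; rewrite xpair_eqE oner_eq0 ?andbF.
Qed.

Lemma A5_iso_params_eq : u.2 = 0 -> (alpha, beta) = (alpha', beta').
Proof.
have [uv uu vv] := A5_iso_images; have [nu nv] := A5_iso_basis_neq0.
have [uv1 uv2] := A5_mul_eq0 hab' uv.
move: uu vv nu nv uv1 uv2; rewrite /A5_mul /v2add /v2scale.
case: u => p r; case: v => s q /= [pp bp] [qa qq] np nq ps _ r0; subst r.
have {}np : p != 0 by apply: contra np => /eqP->.
have s0 : s = 0 by move/eqP: ps; rewrite mulf_eq0 (negbTE np) => /eqP.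
have {}nq : q != 0 by apply: contra nq => /eqP->; rewrite s0.
move: pp bp qa qq; rewrite s0 !mul0r !mulr0 !add0r !addr0 => pp bp qa qq.
have p1 : p = 1 by apply: (mulIf np); rewrite mul1r.
have q1 : q = 1 by apply: (mulIf nq); rewrite mul1r.
by move: bp qa; rewrite p1 q1 !mulr1 => -> ->.
Qed.

Lemma A5_iso_e1_axis : u.2 = 0 \/ u.1 = 0.
Proof.
have [uv _ _] := A5_iso_images; have [_ nv] := A5_iso_basis_neq0.
have [/eqP uv1 /eqP uv2] := A5_mul_eq0 hab' uv.
move: uv1 uv2 nv; rewrite !mulf_eq0.
case: u => p r; case: v => s q /= /orP[/eqP p0 | /eqP s0] /orP[/eqP r0 | /eqP q0] nv.
- by left.
- by right.
- by left.
- by move: nv; rewrite s0 q0 eqxx.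
Qed.

End IsomorphismImages.

Theorem lemma3p6 (K : fieldType) (alpha beta alpha' beta' : K) :
  alpha != 0 -> beta != 0 -> alpha * beta != 1 ->
  alpha' != 0 -> beta' != 0 -> alpha' * beta' != 1 ->
  (A5_isomorphic alpha beta alpha' beta' <->
   ((alpha, beta) = (alpha', beta') \/ (alpha, beta) = (beta', alpha'))).
Proof.
move=> _ _ _ _ _ hab'; split.
- case=> f iso; case: (A5_iso_e1_axis iso hab') => [u2 | u1].
  + by left; apply: A5_iso_params_eq iso hab' u2.
  + by right; apply: A5_iso_params_eq (A5_iso_swap2_comp iso) _ u1; rewrite mulrC.
- by case=> -[-> ->]; [exists id; exact: A5_iso_id | exists swap2; exact: A5_iso_swap2].
Qed.
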